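(* Let $N,k,s,d$ be positive integers with $s\ge3$, let $N\ge s+1$ be prime, and let $\Lambda\subseteq\mathbb{Z}_N$ belong to the family $\Lambda_d(2k,s)$. Let $\vec s=(s_1,\dots,s_l)$ be positive integers with $s_1+\dots+s_l=k$, and let $B(\vec s)=\{i\in[l]: s_i>s\}$. For $x\in\mathbb{Z}_N$ let $E(\vec s)(x)$ be the set of tuples $(\lambda_1,\dots,\lambda_k)\in\Lambda^k$ with $\lambda_1+\dots+\lambda_k=x$ for which there exist pairwise distinct $\tilde\lambda_1,\dots,\tilde\lambda_l\in\Lambda$ such that, for each $i\in[l]$, exactly $s_i$ of the entries $\lambda_1,\dots,\lambda_k$ equal $\tilde\lambda_i$ (so $s_1\tilde\lambda_1+\dots+s_l\tilde\lambda_l=x$). Then for every $x\in\mathbb{Z}_N$, $$|E(\vec s)(x)|\le\frac{k!}{s_1!\cdots s_l!}(s+1)^d|\Lambda|^{|B(\vec s)|}.$$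
   Context: $\mathbb{Z}_N=\mathbb{Z}/N\mathbb{Z}$, $[l]=\{1,\dots,l\}$. Family $\Lambda_d(k,s)$ (for positive integers $k,s,d$): a set $\Lambda=\{\lambda_1,\dots,\lambda_m\}\subseteq\mathbb{Z}_N$ with $\Lambda\cap(-\Lambda)=\emptyset$ belongs to $\Lambda_d(k,s)$ if for every choice of integer vectors $\vec v_1,\dots,\vec v_m\in\mathbb{Z}^d$, $\vec v_j=(v_j^{(1)},\dots,v_j^{(d)})$, with $|v_j^{(i)}|\le s$ for all $i,j$ and $\sum_{j=1}^m|v_j^{(i)}|\le k$ for every $i\in[d]$, satisfying $\lambda_1\vec v_1+\dots+\lambda_m\vec v_m\equiv0\pmod N$ (componentwise), the $d\times m$ matrix $(v_j^{(i)})$ has rank at most $d-1$ (rank over $\mathbb{Q}$). *)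

From HB Require Import structures.
From mathcomp Require Import all_boot all_order all_algebra.
Set Implicit Arguments. Unset Strict Implicit. Unset Printing Implicit Defensive.
Import Order.TTheory GRing.Theory Num.Theory.
Local Open Scope ring_scope.

(* Z_N is modelled by 'Z_N (used only for prime N, so N >= 2). *)
Definition in_Lambda (N d k s : nat) (L : {set 'Z_N}) : Prop :=
  [disjoint L & [set - x | x in L]] /\
  forall v : 'I_d -> 'Z_N -> int,
    (forall i x, x \in L -> `|v i x| <= (s%:Z)) ->
    (forall i, \sum_(x in L) `|v i x| <= (k%:Z)) ->
    (forall i, \sum_(x in L) x *~ v i x = 0) ->
    (\rank (\matrix_(i < d, j < #|L|) ((v i (enum_val j))%:~R : rat)) <= d.-1)%N.

Definition Eset (N k l : nat) (L : {set 'Z_N}) (sv : 'I_l -> nat) (x : 'Z_N)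
  : {set {ffun 'I_k -> 'Z_N}} :=
  [set t : {ffun 'I_k -> 'Z_N} |
     [&& [forall j, t j \in L], \sum_(j < k) t j == x &
         [exists lt : {ffun 'I_l -> 'Z_N},
            [&& injectiveb lt, [forall i, lt i \in L] &
                [forall i, #|[set j | t j == lt i]| == sv i]]]]].

Definition Bset (l s : nat) (sv : 'I_l -> nat) : {set 'I_l} :=
  [set i | (s < sv i)%N].

From HB Require Import structures.
From mathcomp Require Import all_boot all_order all_algebra.
From mathcomp Require Import zify ring.
Import Order.TTheory GRing.Theory Num.Theory.
Set Implicit Arguments. Unset Strict Implicit. Unset Printing Implicit Defensive.

(* A tuple of E(s)(x) is determined, up to the k!/(s_1!...s_l!) orderings of
   its entries, by its occurrence function c : Z_N -> N.  Split c into its big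
   part (the values > s, which sit at the points lambda~_i with i in B(s),
   hence at most |Lambda|^|B(s)| possibilities) and its small part (the values
   <= s).  Two occurrence functions with the same big part have small parts
   whose difference v satisfies |v| <= s, sum |v| <= 2k and
   sum lambda v(lambda) = 0, so by the Lambda_d(2k,s) property any d such
   differences span a space of dimension < d.  All small parts with a given
   big part thus lie in an affine space of dimension <= d-1 and are determined
   by d-1 coordinates in {0..s}: at most (s+1)^(d-1) possibilities. *)

Section RankCounting.
Local Open Scope ring_scope.
Variable F : fieldType.

Lemma row_free_rowsub m n p (A : 'M[F]_(m, n)) (h : 'I_p -> 'I_m) :
  row_free A -> injective h -> row_free (rowsub h A).
Proof.
move=> freeA inj_h; apply: inj_row_free => v.
rewrite rowsubE mulmxA => /eqP; rewrite mulmx_free_eq0 // => /eqP v0.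
apply/rowP => i; have := congr1 (fun w : 'rV_m => w 0 (h i)) v0.
rewrite !mxE (bigD1 i) //= big1 ?addr0 ?mxE ?eqxx ?mulr1 // => j neq_ji.
by rewrite !mxE (inj_eq inj_h) (negbTE neq_ji) mulr0.
Qed.

Lemma mxrank_le_rowsub m n r (A : 'M[F]_(m, n)) :
  (forall g : 'I_r.+1 -> 'I_m, \rank (rowsub g A) <= r)%N -> (\rank A <= r)%N.
Proof.
move=> rk_rowsub; rewrite leqNgt; apply/negP => lt_r_rkA.
pose g := maxrankfun A \o widen_ord lt_r_rkA.
have /eqP free_g : row_free (rowsub g A).
  rewrite /g rowsub_comp; apply: row_free_rowsub; first exact: maxrowsub_free.
  by move=> i j /(congr1 val) /= /val_inj.
by have := rk_rowsub g; rewrite free_g ltnn.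
Qed.

Lemma row_eq_on_maxrank_cols m n (A : 'M[F]_(m, n)) i1 i2 :
  (forall j, A i1 (maxrankfun A^T j) = A i2 (maxrankfun A^T j)) -> row i1 A = row i2 A.
Proof.
move=> eq_cols; pose h := maxrankfun A^T.
have /submxP[D trAD] : (A^T <= rowsub h A^T)%MS by rewrite eq_maxrowsub.
have AD : A = colsub h A *m D^T.
  apply: trmx_inj; rewrite trmx_mul trmxK [LHS]trAD; congr (_ *m _).
  by apply/matrixP => i j; rewrite !mxE.
have rowAE i : row i A = row i (colsub h A) *m D^T by rewrite -row_mul -AD.
by rewrite !rowAE; congr (_ *m _); apply/rowP => j; rewrite !mxE.
Qed.

Variables (T U : finType) (f : T -> F) (n : nat) (e : U -> {ffun 'I_n -> T}).

Definition diffmx m (a : 'I_m -> U) (b : U) : 'M[F]_(m, n) :=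
  \matrix_(i, j) (f (e (a i) j) - f (e b j)).

Lemma card_le_exp_rank (S : {set U}) (r : nat) :
  (0 < #|T|)%N -> injective f -> {in S &, injective e} ->
  (forall (a : 'I_r.+1 -> U) b, (forall i, a i \in S) -> b \in S ->
     \rank (diffmx a b) <= r)%N ->
  (#|S| <= #|T| ^ r)%N.
Proof.
move=> T_gt0 inj_f inj_e rk_diff.
have [->|[b bS]] := set_0Vmem S; first by rewrite cards0.
pose M := diffmx (fun i : 'I_#|S| => enum_val i) b.
have rkM : (\rank M <= r)%N.
  apply: mxrank_le_rowsub => g; rewrite (_ : rowsub g M = diffmx (enum_val \o g) b).
    by apply: rk_diff => // i; apply: enum_valP.
  by apply/matrixP => i j; rewrite !mxE.
pose h := maxrankfun M^T.
pose proj u := [ffun j => e u (h j)].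
have inj_proj : {in S &, injective proj}.
  move=> u1 u2 u1S u2S /ffunP eq_proj; apply: inj_e => //; apply/ffunP => j.
  have eq_rows : row (enum_rank_in u1S u1) M = row (enum_rank_in u1S u2) M.
    apply: row_eq_on_maxrank_cols => j'; rewrite !mxE !enum_rankK_in //.
    by have := eq_proj j'; rewrite !ffunE => ->.
  have := congr1 (fun w : 'rV[F]_n => w 0 j) eq_rows.
  by rewrite !mxE !enum_rankK_in // => /addIr/inj_f.
rewrite -(card_in_imset inj_proj); apply: leq_trans (max_card _) _.
by rewrite card_ffun card_ord leq_pexp2l // mxrank_tr.
Qed.

End RankCounting.

Lemma card_fibers_mul_le (T U : finType) (A : {set T}) (f : T -> U) (p b : nat) :
  (forall y, y \in f @: A -> #|[set a in A | f a == y]| * p <= b) ->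
  #|A| * p <= #|f @: A| * b.
Proof.
move=> fiber_le; rewrite -sum1_card (partition_big f (mem (f @: A))) /=; last first.
  by move=> a aA; apply: imset_f.
rewrite big_distrl /= -sum_nat_const; apply: leq_sum => y fAy.
rewrite (eq_bigl (mem [set a in A | f a == y])) ?sum1_card ?fiber_le // => a.
by rewrite !inE.
Qed.

Section Occurrences.
Variable T : finType.

Definition occ k (t : {ffun 'I_k -> T}) y := #|[set j | t j == y]|.

Lemma occ_le k (t : {ffun 'I_k -> T}) y : occ t y <= k.
Proof. by rewrite -[k in _ <= k]card_ord max_card. Qed.

Lemma sum_occ k (t : {ffun 'I_k -> T}) : \sum_y occ t y = k.
Proof.
rewrite -[k in RHS]card_ord -sum1_card (partition_big t predT) //=.
by apply: eq_bigr => y _; rewrite /occ -sum1dep_card.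
Qed.

Lemma occ_lift0 k (t : {ffun 'I_k.+1 -> T}) y :
  occ t y = (t ord0 == y) + occ [ffun j => t (lift ord0 j)] y.
Proof.
rewrite /occ -!sum1dep_card !(big_mkcond (fun j => _ == y)) big_ord_recl /=.
by congr (_ + _); apply: eq_bigr => j _; rewrite ffunE.
Qed.

Lemma occ_eq0_off_image k l (t : {ffun 'I_k -> T}) (lt : 'I_l -> T) y :
  injective lt -> \sum_i occ t (lt i) = k -> (forall i, lt i != y) -> occ t y = 0.
Proof.
move=> inj_lt sum_lt y_out; apply/eqP; rewrite -leqn0 -(leq_add2l k) addn0.
rewrite -{1}sum_lt -[X in _ <= X](sum_occ t) (bigID (mem [set lt i | i in 'I_l])) /=.
rewrite big_imset /=; last by move=> i j _ _ /inj_lt.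
rewrite leq_add2l (bigD1 y) ?leq_addr //=.
by apply/imsetP => -[i _ y_lt]; move: (y_out i); rewrite y_lt eqxx.
Qed.

Lemma prod_fact_occ k l (t : {ffun 'I_k -> T}) (lt : 'I_l -> T) :
  injective lt -> \sum_i occ t (lt i) = k ->
  \prod_y (occ t y)`! = \prod_i (occ t (lt i))`!.
Proof.
move=> inj_lt sum_lt; rewrite (bigID (mem [set lt i | i in 'I_l])) /=.
rewrite big_imset /=; last by move=> i j _ _ /inj_lt.
rewrite [X in _ * X]big1 ?muln1 // => y /imsetP y_out.
rewrite (occ_eq0_off_image inj_lt sum_lt) //.
by move=> i; apply/eqP => lt_y; apply: y_out; exists i.
Qed.

Lemma sum_ffun_occ (V : nmodType) k (t : {ffun 'I_k -> T}) (F : T -> V) :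
  (\sum_j F (t j) = \sum_y F y *+ occ t y)%R.
Proof.
rewrite (partition_big t predT) //=; apply: eq_bigr => y _.
by rewrite /occ -sumr_const; apply: eq_big => [j|j /eqP ->]; rewrite ?inE.
Qed.

Definition tuples_with_occ k (c : T -> nat) :=
  [set t : {ffun 'I_k -> T} | [forall y, occ t y == c y]].

Lemma card_tuples_with_occ_head k c mu :
  #|[set t in tuples_with_occ k.+1 c | t ord0 == mu]|
    <= #|tuples_with_occ k (fun y => c y - (mu == y))|.
Proof.
pose tail (t : {ffun 'I_k.+1 -> T}) := [ffun j => t (lift ord0 j)].
have inj_tail : {in [set t in tuples_with_occ k.+1 c | t ord0 == mu] &, injective tail}.
  move=> t1 t2; rewrite !inE => /andP[_ /eqP t1mu] /andP[_ /eqP t2mu] /ffunP eq_tail.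
  apply/ffunP => j; case: (unliftP ord0 j) => [j'|] ->; last by rewrite t1mu t2mu.
  by have := eq_tail j'; rewrite !ffunE.
rewrite -(card_in_imset inj_tail); apply/subset_leq_card/subsetP => _ /imsetP[t + ->].
rewrite !inE => /andP[/forallP occ_t /eqP tmu]; apply/forallP => y.
by rewrite -(eqP (occ_t y)) occ_lift0 tmu addKn.
Qed.

Lemma prod_fact_occ_pred (c : T -> nat) mu : 0 < c mu ->
  \prod_y (c y)`! = c mu * \prod_y (c y - (mu == y))`!.
Proof.
move=> c_mu_gt0; rewrite (bigD1 mu) // [in RHS](bigD1 mu) //= eqxx subn1 mulnA.
rewrite -[c mu in LHS](prednK c_mu_gt0) factS prednK //; congr (_ * _).
by apply: eq_bigr => y; rewrite eq_sym => /negbTE ->; rewrite subn0.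
Qed.

Lemma card_tuples_with_occ_le k (c : T -> nat) :
  #|tuples_with_occ k c| * \prod_y (c y)`! <= k`!.
Proof.
elim: k c => [|k IHk] c.
  have [->|[t0 t0c]] := set_0Vmem (tuples_with_occ 0 c); first by rewrite cards0.
  rewrite big1 ?muln1; first by rewrite (leq_trans (max_card _)) // card_ffun card_ord.
  move=> y _; move: t0c; rewrite inE => /forallP/(_ y)/eqP <-.
  by have := occ_le t0 y; rewrite leqn0 => /eqP ->.
have [->|[t0]] := set_0Vmem (tuples_with_occ k.+1 c); first by rewrite cards0.
rewrite inE => /forallP occ_t0.
have sum_c : \sum_y c y = k.+1.
  by rewrite -(sum_occ t0); apply: eq_bigr => y _; apply/esym/eqP/occ_t0.
rewrite -sum1_card (partition_big (fun t : {ffun 'I_k.+1 -> T} => t ord0) predT) //=.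
rewrite big_distrl /= factS -[k.+1 in leqRHS]sum_c big_distrl; apply: leq_sum => mu _.
set S_mu := [set t in tuples_with_occ k.+1 c | t ord0 == mu].
rewrite (eq_bigl (mem S_mu)) ?sum1_card => [|t]; last by rewrite !inE.
case: (posnP (c mu)) => [c_mu0|c_mu_gt0].
  rewrite c_mu0 (_ : S_mu = set0) ?cards0 //; apply/setP => t.
  rewrite !inE; apply/negP => /andP[/forallP/(_ mu)/eqP + /eqP t_mu].
  by rewrite occ_lift0 c_mu0 t_mu eqxx.
rewrite (prod_fact_occ_pred c_mu_gt0) mulnCA leq_mul2l; apply/orP; right.
exact: leq_trans (leq_mul (card_tuples_with_occ_head k c mu) (leqnn _)) (IHk _).
Qed.

Definition occ_fun k (t : {ffun 'I_k -> T}) : {ffun T -> 'I_k.+1} :=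
  [ffun y => inord (occ t y)].

Lemma occ_funE k (t : {ffun 'I_k -> T}) y : occ_fun t y = occ t y :> nat.
Proof. by rewrite ffunE inordK // ltnS occ_le. Qed.

End Occurrences.

Section EsetCount.
Variables (N k l s : nat) (L : {set 'Z_N}) (sv : 'I_l -> nat) (x : 'Z_N).
Hypothesis sum_sv : \sum_i sv i = k.

Local Notation E := (@Eset N k l L sv x).
Local Notation B := (@Bset l s sv).
Local Notation C := [set occ_fun t | t in E].

Lemma Eset_witness t : t \in E ->
  [/\ forall j, t j \in L, (\sum_j t j)%R = x &
      exists2 lt : {ffun 'I_l -> 'Z_N}, injective lt &
        (forall i, lt i \in L) /\ (forall i, occ t (lt i) = sv i)].
Proof.
rewrite inE => /and3P[/forallP tL /eqP sum_t /existsP[lt]].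
case/and3P => /injectiveP inj_lt /forallP ltL /forallP occ_lt.
by split=> //; exists lt => //; split=> // i; apply/eqP/occ_lt.
Qed.

Lemma occ_Eset t : t \in E ->
  [/\ forall y, y \notin L -> occ t y = 0,
      \sum_(y in L) occ t y = k & (\sum_(y in L) y *+ occ t y)%R = x].
Proof.
case/Eset_witness => tL sum_t _.
have occ_out y : y \notin L -> occ t y = 0.
  move=> yL; apply/eqP; rewrite cards_eq0; apply/eqP/setP => j; rewrite !inE.
  by apply/negP => /eqP tj; move: (tL j); rewrite tj (negbTE yL).
split=> //.
  rewrite -[RHS](sum_occ t) [RHS](bigID (mem L)) /=.
  by rewrite [X in _ = _ + X]big1 ?addn0 // => y /occ_out.
rewrite -sum_t (sum_ffun_occ t id) [RHS](bigID (mem L)) /=.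
by rewrite [X in _ = (_ + X)%R]big1 ?addr0 // => y /occ_out ->.
Qed.

Lemma card_Eset_mul_le : #|E| * \prod_i (sv i)`! <= #|C| * k`!.
Proof.
apply: card_fibers_mul_le => _ /imsetP[t0 t0E ->].
have [_ _ [lt inj_lt [_ occ_lt]]] := Eset_witness t0E.
have sum_lt : \sum_i occ t0 (lt i) = k by rewrite -[RHS]sum_sv; apply: eq_bigr => i _.
rewrite (eq_bigr (fun i => (occ t0 (lt i))`!)) => [|i _]; last by rewrite occ_lt.
rewrite -(prod_fact_occ inj_lt sum_lt).
apply: leq_trans (card_tuples_with_occ_le k (occ t0)).
rewrite leq_mul2r; apply/orP; right; apply/subset_leq_card/subsetP => t.
rewrite !inE => /andP[_ /eqP eq_occ]; apply/forallP => y.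
by rewrite -!occ_funE eq_occ.
Qed.

Definition bigpart (c : {ffun 'Z_N -> 'I_k.+1}) : {ffun 'Z_N -> 'I_k.+1} :=
  [ffun y => if s < c y then c y else ord0].

Definition smallpart (c : {ffun 'Z_N -> 'I_k.+1}) y : nat := if s < c y then 0 else c y.

Lemma smallpart_le c y : smallpart c y <= s.
Proof. by rewrite /smallpart; case: ltnP. Qed.

Lemma bigpart_add_smallpart (c : {ffun 'Z_N -> 'I_k.+1}) y :
  c y = bigpart c y + smallpart c y :> nat.
Proof. by rewrite ffunE /smallpart; case: ifP; rewrite ?addn0. Qed.

Lemma bigpart_occ t (lt : 'I_l -> 'Z_N) y :
  injective lt -> (forall i, occ t (lt i) = sv i) ->
  bigpart (occ_fun t) y = \sum_(i in B | lt i == y) sv i :> nat.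
Proof.
move=> inj_lt occ_lt; rewrite ffunE (fun_if (@nat_of_ord _)) !occ_funE big_mkcondl /=.
case: (pickP (fun i => lt i == y)) => [i0 /eqP <- | lt_y].
  rewrite (big_pred1 i0) => [|i]; last by rewrite /= (inj_eq inj_lt).
  by rewrite occ_lt /Bset inE.
have sum_lt : \sum_i occ t (lt i) = k by rewrite -[RHS]sum_sv; apply: eq_bigr => i _.
rewrite (occ_eq0_off_image inj_lt sum_lt) => [|i]; last by rewrite lt_y.
by rewrite big_pred0 // if_same.
Qed.

Definition bigpart_of (g : {ffun 'I_l -> 'Z_N}) : {ffun 'Z_N -> 'I_k.+1} :=
  [ffun y => inord (\sum_(i in B | g i == y) sv i)].

Lemma card_bigpart_le : #|[set bigpart c | c in C]| <= #|L| ^ #|B|.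
Proof.
rewrite -(card_pffun_on (0 : 'Z_N)%R B L); apply: leq_trans (leq_imset_card bigpart_of _).
apply/subset_leq_card/subsetP => _ /imsetP[_ /imsetP[t tE ->] ->].
have [_ _ [lt inj_lt [ltL occ_lt]]] := Eset_witness tE.
apply/imsetP; exists [ffun i => if i \in B then lt i else 0%R].
  apply/pffun_onP; split.
    by apply/subsetP => i; rewrite inE ffunE; case: ifP => // _; rewrite eqxx.
  by move=> _ /imageP[i iB ->]; rewrite ffunE iB.
apply/ffunP => y; rewrite [RHS]ffunE -[LHS]inord_val (bigpart_occ y inj_lt occ_lt).
by congr inord; apply: eq_bigl => i; rewrite ffunE; case: (i \in B).
Qed.

Lemma smallpart_occ_image c : c \in C ->
  [/\ forall y, y \notin L -> smallpart c y = 0, \sum_(y in L) smallpart c y <= k &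
      (\sum_(y in L) y *+ smallpart c y = x - \sum_(y in L) y *+ bigpart c y)%R].
Proof.
case/imsetP=> t /occ_Eset[occ_out sum_occ_L sum_mul_occ_L] ->.
have occ_split y : occ t y = bigpart (occ_fun t) y + smallpart (occ_fun t) y.
  by rewrite -bigpart_add_smallpart occ_funE.
split.
- by move=> y yL; rewrite /smallpart occ_funE occ_out ?if_same.
- by rewrite -[leqRHS]sum_occ_L; apply: leq_sum => y _; rewrite occ_split leq_addl.
- rewrite -sum_mul_occ_L -sumrB; apply: eq_bigr => y _.
  by rewrite occ_split mulrnDr addrC addKr.
Qed.

Definition smallvec c : {ffun 'I_#|L| -> 'I_s.+1} :=
  [ffun j => inord (smallpart c (enum_val j))].

Lemma smallvecE c j : smallvec c j = smallpart c (enum_val j) :> nat.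
Proof. by rewrite ffunE inordK // ltnS smallpart_le. Qed.

Definition ord_to_rat n (i : 'I_n) : rat := (i : nat)%:R.

Lemma ord_to_rat_inj n : injective (@ord_to_rat n).
Proof. by move=> i j /eqP; rewrite eqr_nat => /eqP/val_inj. Qed.

Variable d : nat.
Hypothesis L_in_Lambda : @in_Lambda N d.+1 (2 * k) s L.

Lemma rank_diff_smallvec (a : 'I_d.+1 -> {ffun 'Z_N -> 'I_k.+1}) b :
  (forall i, a i \in C) -> b \in C -> (forall i, bigpart (a i) = bigpart b) ->
  \rank (diffmx (@ord_to_rat _) smallvec a b) <= d.
Proof.
move=> aC bC big_ab; have [_ rank_le] := L_in_Lambda.
pose v i y := ((smallpart (a i) y)%:Z - (smallpart b y)%:Z)%R.
have -> : diffmx (@ord_to_rat _) smallvec a b = (\matrix_(i, j) (v i (enum_val j))%:~R)%R.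
  by apply/matrixP => i j; rewrite !mxE /ord_to_rat !smallvecE /v intrB.
apply: rank_le => [i y _ | i | i].
- by rewrite /v; have := smallpart_le (a i) y; have := smallpart_le b y; lia.
- apply: (@le_trans _ _ (\sum_(y in L) (smallpart (a i) y + smallpart b y)%N%:Z)%R).
    by apply: ler_sum => y _; rewrite /v; lia.
  rewrite -(big_morph Posz PoszD (erefl 0%Z)) lez_nat big_split /= mul2n -addnn.
  by apply: leq_add;
    [case: (smallpart_occ_image (aC i)) | case: (smallpart_occ_image bC)].
- have [_ _ sum_a] := smallpart_occ_image (aC i).
  have [_ _ sum_b] := smallpart_occ_image bC.
  under eq_bigr => y _ do rewrite /v mulrzBr -!pmulrn.
  by rewrite sumrB sum_a sum_b big_ab subrr.
Qed.

Lemma card_bigpart_fiber_le be : #|[set c in C | bigpart c == be]| <= s.+1 ^ d.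
Proof.
rewrite -[s.+1]card_ord; apply: (card_le_exp_rank (f := @ord_to_rat _) (e := smallvec)).
- by rewrite card_ord.
- exact: ord_to_rat_inj.
- move=> c1 c2; rewrite !inE => /andP[c1C /eqP big_c1] /andP[c2C /eqP big_c2] eq_small.
  apply/ffunP => y; apply: ord_inj.
  rewrite [LHS]bigpart_add_smallpart [RHS]bigpart_add_smallpart big_c1 big_c2.
  congr (_ + _).
  have [[out1 _ _] [out2 _ _]] := (smallpart_occ_image c1C, smallpart_occ_image c2C).
  case: (boolP (y \in L)) => yL; last by rewrite out1 ?out2.
  have /ffunP/(_ (enum_rank_in yL y))/(congr1 val) := eq_small.
  by rewrite /= !smallvecE enum_rankK_in.
- move=> a b aS bS; rewrite inE in bS; case/andP: bS => bC /eqP big_b.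
  apply: rank_diff_smallvec => [i|//|i]; first by have := aS i; rewrite inE => /andP[].
  by have := aS i; rewrite inE big_b => /andP[_ /eqP].
Qed.

Lemma card_occ_image_le : #|C| <= #|L| ^ #|B| * s.+1 ^ d.
Proof.
have := @card_fibers_mul_le _ _ C bigpart 1 (s.+1 ^ d).
rewrite !muln1 => /(_ _)/leq_trans; apply=> [be _|].
  by rewrite muln1 card_bigpart_fiber_le.
by rewrite leq_mul2r card_bigpart_le orbT.
Qed.

End EsetCount.

Unset Implicit Arguments.
Local Open Scope ring_scope.

Theorem lemma25 (N k s d : nat) (L : {set 'Z_N}) (l : nat) (sv : 'I_l -> nat)
  (x : 'Z_N) :
  (0 < N)%N -> (0 < k)%N -> (0 < s)%N -> (0 < d)%N ->
  (3 <= s)%N -> prime N -> (s.+1 <= N)%N ->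
  @in_Lambda N d (2 * k) s L ->
  (forall i, 0 < sv i)%N ->
  (\sum_(i < l) sv i)%N = k ->
  (#|@Eset N k l L sv x|%:R : rat) <=
    (k`!)%:R / (\prod_(i < l) (sv i)`!)%:R * ((s.+1) ^ d)%:R
    * (#|L| ^ #|@Bset l s sv|)%:R.
Proof.
move=> _ _ _ + _ _ _ + _ sum_sv; case: d => // d _ L_in_Lambda.
set P := (\prod_(i < l) (sv i)`!)%N; set E := @Eset N k l L sv x.
set bound := (k`! * s.+1 ^ d.+1 * #|L| ^ #|@Bset l s sv|)%N.
have P_gt0 : (0 < P)%N by apply: prodn_gt0 => i; apply: fact_gt0.
have card_E_le : (#|E| * P <= bound)%N.
  apply: (leq_trans (card_Eset_mul_le L x sum_sv)).
  apply: (leq_trans (leq_mul (card_occ_image_le x sum_sv L_in_Lambda) (leqnn _))).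
  have le_pow : (s.+1 ^ d <= s.+1 ^ d.+1)%N by rewrite leq_pexp2l.
  by rewrite /bound [leqLHS]mulnC mulnA [leqRHS]mulnAC leq_mul2l le_pow orbT.
have -> : (k`!)%:R / P%:R * ((s.+1) ^ d.+1)%:R * (#|L| ^ #|@Bset l s sv|)%:R
          = bound%:R / P%:R :> rat.
  by rewrite /bound !natrM; ring.
by rewrite ler_pdivlMr ?ltr0n // -natrM ler_nat.
Qed.
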